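(* Let $X$ and $Y$ be sets of points in a tree with $|X|=|Y|$, and let $r\in X$. Then there exists a minimum cost perfect matching of $X$ to $Y$ (cost = sum of tree distances of matched pairs) that is $r$-local, i.e., in which $r$ is matched to a point $y\in Y$ such that the path $\mathcal{P}(r,y)$ contains no point of $Y$ other than $y$.
   Context: The tree carries its path metric $d$; $\mathcal{P}(v,w)$ denotes the unique path between points $v$ and $w$. *)

From Stdlib Require Import ClassicalEpsilon.
From mathcomp Require Import all_boot all_order all_algebra.
Set Implicit Arguments. Unset Strict Implicit. Unset Printing Implicit Defensive.
Import Order.TTheory GRing.Theory Num.Theory.
Local Open Scope ring_scope.

Section Tree.
Variable T : finType.
Variable e : rel T.

(* p is (the tail of) a simple e-path u = u0, u1, ..., uk = v *)
Definition upath (u : T) (p : seq T) (v : T) : bool :=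
  [&& path e u p, last u p == v & uniq (u :: p)].

Definition is_tree : Prop :=
  symmetric e /\ irreflexive e /\
  (forall u v : T, exists! p : seq T, upath u p v).

Definition tpath (u v : T) : seq T :=
  epsilon (inhabits [::]) (fun p => upath u p v).

Definition Ppath (u v : T) : seq T := u :: tpath u v.

Variable R : realFieldType.
Variable w : T -> T -> R.

Definition is_edge_length : Prop :=
  (forall u v, w u v = w v u) /\ (forall u v, e u v -> 0 < w u v).

Fixpoint plen (u : T) (p : seq T) : R :=
  if p is x :: p' then w u x + plen x p' else 0.

Definition tdist (u v : T) : R := plen u (tpath u v).

Definition perfect_matching (X Y : {set T}) (f : T -> T) : Prop :=
  {in X &, injective f} /\ f @: X = Y.

Definition mcost (X : {set T}) (f : T -> T) : R :=
  \sum_(x in X) tdist x (f x).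

Definition min_cost_pm (X Y : {set T}) (f : T -> T) : Prop :=
  perfect_matching X Y f /\
  forall g, perfect_matching X Y g -> mcost X f <= mcost X g.

Definition r_local (Y : {set T}) (r : T) (f : T -> T) : Prop :=
  forall z, z \in Ppath r (f r) -> z \in Y -> z = f r.

End Tree.

(** Take a minimum cost matching [f].  If the path [P(r, f r)] meets [Y] in a
    point [z = f x] other than [f r], swap the partners of [r] and [x].  Since
    [z] lies on [P(r, f r)] we have [d(r, f r) = d(r, z) + d(z, f r)], whereas
    [d(x, f r) <= d(x, z) + d(z, f r)], so the swap does not increase the cost.
    The new path [P(r, z)] is a proper prefix of [P(r, f r)], so repeating the
    exchange ends in an [r]-local minimum cost matching. *)
From Stdlib Require Import ClassicalEpsilon.
From mathcomp Require Import all_boot all_order all_algebra.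
From mathcomp Require Import perm lra.
Set Implicit Arguments. Unset Strict Implicit. Unset Printing Implicit Defensive.
Import Order.TTheory GRing.Theory Num.Theory.
Local Open Scope ring_scope.

Section TreePaths.
Variables (T : finType) (e : rel T).
Hypothesis tree_e : is_tree e.

Lemma tpathP u v : upath e u (tpath e u v) v.
Proof.
apply: (epsilon_spec (inhabits [::]) (fun p => upath e u p v)).
by have [p [up _]] := tree_e.2.2 u v; exists p.
Qed.

Lemma upath_tpath u p v : upath e u p v -> p = tpath e u v.
Proof.
have [q [_ uniq_q]] := tree_e.2.2 u v.
by move=> up; rewrite -(uniq_q _ up) (uniq_q _ (tpathP u v)).
Qed.

Lemma tpathxx u : tpath e u u = [::].
Proof. by symmetry; apply: upath_tpath; rewrite /upath /= eqxx. Qed.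

Lemma upath_cat u p1 p2 v : upath e u (p1 ++ p2) v ->
  upath e u p1 (last u p1) /\ upath e (last u p1) p2 v.
Proof.
case/and3P; rewrite cat_path last_cat -cat_cons cat_uniq.
case/andP=> path1 path2 last2 /and3P[uniq1 disj uniq2].
rewrite /upath path1 path2 last2 eqxx uniq1 /= uniq2 andbT; split=> //.
by apply: contra disj => last_p2; apply/hasP; exists (last u p1); rewrite ?mem_last.
Qed.

Lemma tpath_cat u v z : z \in Ppath e u v ->
  tpath e u v = tpath e u z ++ tpath e z v.
Proof.
move=> z_on; have := tpathP u v; rewrite [Ppath _ _ _]/= in z_on.
case/splitPl: (tpath e u v) / z_on => p1 p2 <- /upath_cat[up1 up2].
by rewrite -(upath_tpath up1) -(upath_tpath up2).
Qed.

Lemma size_tpath_lt u v z : z \in Ppath e u v -> z != v ->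
  (size (tpath e u z) < size (tpath e u v))%N.
Proof.
move=> /tpath_cat -> zv; rewrite size_cat -addn1 leq_add2l lt0n size_eq0.
apply: contra zv => /eqP nil_zv; have /and3P[_ /eqP] := tpathP z v.
by rewrite nil_zv /= => ->.
Qed.

Variables (R : realFieldType) (w : T -> T -> R).
Hypothesis length_w : is_edge_length e w.

Lemma plen_ge0 u p : path e u p -> 0 <= plen w u p.
Proof.
elim: p u => [|x p IHp] u //= /andP[eux px].
by rewrite addr_ge0 ?IHp // ltW ?length_w.2.
Qed.

Lemma plen_cat u p1 p2 :
  plen w u (p1 ++ p2) = plen w u p1 + plen w (last u p1) p2.
Proof. by elim: p1 u => [|x p IHp] u /=; rewrite ?add0r // IHp addrA. Qed.

Lemma tdist_ge0 u v : 0 <= tdist e w u v.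
Proof. by have /and3P[p _ _] := tpathP u v; apply: plen_ge0. Qed.

Lemma tdist_split u v z : z \in Ppath e u v ->
  tdist e w u v = tdist e w u z + tdist e w z v.
Proof.
move=> /tpath_cat tpath_uv; rewrite /tdist tpath_uv plen_cat.
by have /and3P[_ /eqP -> _] := tpathP u z.
Qed.

Lemma tdist_le_edge u x v : e u x -> tdist e w u v <= w u x + tdist e w x v.
Proof.
move=> eux; have wux : 0 <= w u x by rewrite ltW ?length_w.2.
have [u_on|u_off] := boolP (u \in Ppath e x v).
  by rewrite [tdist e w x v](tdist_split u_on) addrA lerDr addr_ge0 ?tdist_ge0.
rewrite /tdist; suff -> : tpath e u v = x :: tpath e x v by [].
symmetry; apply: upath_tpath; have /and3P[px lastx uniqx] := tpathP x v.
by rewrite /upath /= eux px lastx /= u_off.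
Qed.

Lemma tdist_le_plen u p : path e u p -> tdist e w u (last u p) <= plen w u p.
Proof.
elim: p u => [|x p IHp] u /=; first by rewrite /tdist tpathxx.
case/andP=> eux /IHp le_xp.
by apply: le_trans (tdist_le_edge _ eux) _; rewrite lerD2l le_xp.
Qed.

Lemma tdist_triangle u v z : tdist e w u v <= tdist e w u z + tdist e w z v.
Proof.
have /and3P[puz /eqP last_uz _] := tpathP u z.
have /and3P[pzv /eqP last_zv _] := tpathP z v.
have := @tdist_le_plen u (tpath e u z ++ tpath e z v).
by rewrite cat_path last_cat plen_cat last_uz puz pzv last_zv => /(_ isT).
Qed.

End TreePaths.

Section Matchings.
Variables (T : finType) (X Y : {set T}).

Lemma card_perfect_matching f : perfect_matching X Y f -> #|X| = #|Y|.
Proof. by case=> f_inj <-; rewrite card_in_imset. Qed.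

Lemma inj_perfect_matching f : #|X| = #|Y| -> {in X &, injective f} ->
  {in X, forall x, f x \in Y} -> perfect_matching X Y f.
Proof.
move=> card_XY f_inj fXY; split=> //; apply/eqP.
rewrite eqEcard card_in_imset // card_XY leqnn andbT.
by apply/subsetP=> _ /imsetP[x Xx ->]; apply: fXY.
Qed.

Lemma perfect_matching_exists :
  #|X| = #|Y| -> exists f, perfect_matching X Y f.
Proof.
move=> card_XY; have idx_lt x : x \in X -> (index x (enum X) < size (enum Y))%N.
  by rewrite -cardE -card_XY cardE index_mem mem_enum.
exists (fun x => nth x (enum Y) (index x (enum X))).
apply: inj_perfect_matching => // [x1 x2 Xx1 Xx2|x Xx]; last first.
  by rewrite -mem_enum mem_nth ?idx_lt.
move=> eq_nth; have : nth x1 (enum Y) (index x1 (enum X)) ==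
                     nth x1 (enum Y) (index x2 (enum X)).
  by rewrite eq_nth (set_nth_default x1 x2) ?idx_lt.
rewrite nth_uniq ?enum_uniq ?idx_lt // => /eqP.
by apply: index_inj; rewrite ?mem_enum.
Qed.

Lemma perfect_matching_tperm f a b : a \in X -> b \in X ->
  perfect_matching X Y f -> perfect_matching X Y (f \o tperm a b).
Proof.
move=> Xa Xb pm_f; have [f_inj f_im] := pm_f.
have tpermX x : x \in X -> tperm a b x \in X.
  by case: tpermP => // ->.
apply: inj_perfect_matching; first exact: card_perfect_matching pm_f.
  by move=> x1 x2 Xx1 Xx2 /(f_inj _ _ (tpermX _ Xx1) (tpermX _ Xx2)) /perm_inj.
by move=> x Xx; rewrite -f_im /= imset_f ?tpermX.
Qed.

Variables (e : rel T) (R : realFieldType) (w : T -> T -> R).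

Lemma min_cost_pm_exists :
  #|X| = #|Y| -> exists f, min_cost_pm e w X Y f.
Proof.
move=> /perfect_matching_exists[f0 pm_f0].
pose pm_b (g : {ffun T -> T}) := dinjectiveb g X && (g @: X == Y).
have pm_bP g : perfect_matching X Y g -> pm_b [ffun x => g x].
  case=> g_inj g_im; rewrite /pm_b -g_im (eq_imset _ (ffunE _)) eqxx andbT.
  by apply/dinjectiveP=> x1 x2 Xx1 Xx2; rewrite !ffunE; apply: g_inj.
have mcost_ffun g : mcost e w X [ffun x => g x] = mcost e w X g.
  by apply: eq_bigr=> x _; rewrite ffunE.
case: (arg_minP (fun g : {ffun T -> T} => mcost e w X g) (pm_bP _ pm_f0)).
move=> f /andP[f_inj /eqP f_im] f_min.
exists f; split; first by split=> //; apply/dinjectiveP.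
by move=> g /pm_bP/f_min; rewrite mcost_ffun.
Qed.

Lemma mcost_tperm f a b : a \in X -> b \in X -> a != b ->
  mcost e w X (f \o tperm a b) + (tdist e w a (f a) + tdist e w b (f b)) =
  mcost e w X f + (tdist e w a (f b) + tdist e w b (f a)).
Proof.
move=> Xa Xb ab; have Xb' : (b \in X) && (b != a) by rewrite Xb eq_sym.
rewrite /mcost !(bigD1 a Xa) !(bigD1 b Xb') /= tpermL tpermR.
rewrite (eq_bigr (fun x => tdist e w x (f x))); first lra.
by move=> x /andP[/andP[_ xa] xb]; rewrite /= tpermD // eq_sym.
Qed.

End Matchings.

Section Exchange.
Variables (T : finType) (e : rel T) (R : realFieldType) (w : T -> T -> R).
Hypotheses (tree_e : is_tree e) (length_w : is_edge_length e w).
Variables (X Y : {set T}) (r : T).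
Hypothesis Xr : r \in X.

Lemma min_cost_pm_exchange f z :
  min_cost_pm e w X Y f -> z \in Ppath e r (f r) -> z \in Y -> z != f r ->
  exists2 g, min_cost_pm e w X Y g & g r = z.
Proof.
move=> [pm_f f_min] z_on Yz zfr; have [_ f_im] := pm_f.
have /imsetP[x Xx z_fx] : z \in f @: X by rewrite f_im.
subst z; have rx : r != x by apply: contraNneq zfr => ->.
exists (f \o tperm r x); last by rewrite /= tpermL.
have pm_g := perfect_matching_tperm Xr Xx pm_f.
split=> // g pm_g'; apply: le_trans (f_min _ pm_g').
have := mcost_tperm e w f Xr Xx rx.
have := tdist_split tree_e w z_on.
have := tdist_triangle tree_e length_w x (f r) (f x).
lra.
Qed.

Lemma min_cost_pm_r_local f : min_cost_pm e w X Y f ->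
  exists g, min_cost_pm e w X Y g /\ r_local e Y r g.
Proof.
have [n] := ubnP (size (tpath e r (f r))).
elim: n f => // n IHn f lt_n f_min.
case: (pickP [pred z | [&& z \in Ppath e r (f r), z \in Y & z != f r]]).
  move=> z /and3P[z_on Yz zfr].
  have [g g_min gr] := min_cost_pm_exchange f_min z_on Yz zfr.
  apply: (IHn g) g_min; rewrite gr.
  by apply: leq_trans (size_tpath_lt tree_e z_on zfr) _; rewrite -ltnS.
move=> no_z; exists f; split=> // z z_on Yz; apply/eqP.
by have := no_z z; rewrite /= z_on Yz /= => /negbFE.
Qed.

End Exchange.

Theorem lemma3 (T : finType) (e : rel T) (R : realFieldType) (w : T -> T -> R)
  (X Y : {set T}) (r : T) :
  is_tree e -> is_edge_length e w ->
  #|X| = #|Y| -> r \in X ->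
  exists f : T -> T, min_cost_pm e w X Y f /\ r_local e Y r f.
Proof.
move=> tree_e length_w card_XY Xr.
have [f f_min] := min_cost_pm_exists e w card_XY.
exact: min_cost_pm_r_local f_min.
Qed.
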